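(* Assume that for every $k\ge 1$ the function $\hat{\mathcal L}(\cdot,y_k)$ is convex, that $\tau_1\tau_2\|K\|^2\le 1/4$ and $\tau_1\le 1/(4L)$. For $k\ge1$ define \[\varepsilon_k:=\hat{\mathcal L}(x_k,y_k)-\ell_{\hat{\mathcal L}(\cdot,y_k)}(x_k;x_{k-1}).\] Let $(x_*,y_* )$ be a saddle point of $\Phi$. Then: (a) for every $k\ge1$, \[r^y_k:=\frac{y^{k-1}-y^k}{\tau_2}\in\partial\big[-\hat{\mathcal L}(x_k,\cdot)+h_2\big](y_k),\qquad r^x_k:=\frac{x_{k-1}-x_k}{\tau_1}\in\partial_{\varepsilon_k}\big[\hat{\mathcal L}(\cdot,y_k)+h_1\big](x_k);\] (b) for every $k\ge1$, $\varepsilon_k\le \frac{1}{8\tau_1}\|x_k-x_{k-1}\|^2$ and $\frac{1}{\tau_2}\|y^k-y_k\|^2\le\frac{1}{4\tau_1}\|x_k-x_{k-1}\|^2$; (c) for every $N\ge1$, \[\frac{1}{4\tau_1}\sum_{k=1}^N\|x_k-x_{k-1}\|^2+\frac{1}{2\tau_2}\sum_{k=1}^N\|y_k-y^{k-1}\|^2\le\frac{1}{2\tau_1}\|x_*-x_0\|^2+\frac{1}{2\tau_2}\|y_*-y_0\|^2.\]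
   Context: Let $n,m_1,m_2$ be positive integers, $Q\in\mathbb R^{n\times n}$ symmetric, $c\in\mathbb R^n$, $A\in\mathbb R^{m_1\times n}$, $b\in\mathbb R^{m_1}$, $B\in\mathbb R^{m_2\times n}$, $d\in\mathbb R^{m_2}$. Let $K:=-\begin{pmatrix}A\\ B\end{pmatrix}\in\mathbb R^{(m_1+m_2)\times n}$ and $r:=(b;d)\in\mathbb R^{m_1+m_2}$. Fix $\rho\ge0$ and let $\mathbf 1$ be the all-ones vector. For $x\in\mathbb R^n$, $y\in\mathbb R^{m_1+m_2}$ define $\hat{\mathcal L}(x,y):=\langle x,Qx\rangle+\langle c,x\rangle+\langle y,Kx+r\rangle+\rho\langle x,\mathbf 1-x\rangle$, so $\nabla_x\hat{\mathcal L}(x,y)=c+\rho\mathbf 1+K^\top y+2Qx-2\rho x$ and $\nabla_y\hat{\mathcal L}(x,y)=Kx+r$. Let $Y:=\mathbb R_+^{m_1}\times\mathbb R^{m_2}$, $h_1$ the indicator of $[0,1]^n$ and $h_2$ the indicator of $Y$ (value $0$ on the set, $+\infty$ outside), and $\Phi(x,y):=\hat{\mathcal L}(x,y)+h_1(x)-h_2(y)$. A saddle point $(x_*,y_* )$ of $\Phi$ satisfies $\Phi(x_*,y)\le\Phi(x_*,y_* )\le\Phi(x,y_* )$ for all $x,y$. Let $L:=2(\|Q\|+\rho)$, where $\|\cdot\|$ on matrices is the spectral norm. For differentiable $f$, $\ell_f(x;x'):=f(x')+\langle\nabla f(x'),x-x'\rangle$. For a convex function $g$, $\partial g$ is its subdifferential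 and $\partial_\varepsilon g(x):=\{v: g(z)\ge g(x)+\langle v,z-x\rangle-\varepsilon\ \forall z\}$. PDHG iterates with step sizes $\tau_1,\tau_2>0$: choose $x_0\in[0,1]^n$, $y_0\in\mathbb R^{m_1+m_2}$, set $x_{-1}:=x_0$, $\bar x_0:=x_0$, and for $k\ge1$: $y_k=\Pi_Y(y_{k-1}+\tau_2(K\bar x_{k-1}+r))$, $x_k=\Pi_{[0,1]^n}(x_{k-1}-\tau_1\nabla_x\hat{\mathcal L}(x_{k-1},y_k))$, $\bar x_k=2x_k-x_{k-1}$, where $\Pi$ denotes Euclidean projection. Auxiliary sequence: $y^0:=y_0$ and $y^k:=y_k+\tau_2K(\bar x_k-x_k)$ for $k\ge1$. *)

From HB Require Import structures.
From mathcomp Require Import all_boot all_order all_algebra.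
From mathcomp Require Import all_classical all_reals.
Set Implicit Arguments. Unset Strict Implicit. Unset Printing Implicit Defensive.
Import Order.TTheory GRing.Theory Num.Theory.
Local Open Scope ring_scope.
Local Open Scope classical_set_scope.

Section PDHG.
Variable R : realType.

Definition dot (p : nat) (u v : 'cV[R]_p) : R := \sum_(i < p) u i 0 * v i 0.
Definition enorm (p : nat) (u : 'cV[R]_p) : R := Num.sqrt (dot u u).

Definition opnorm (p q : nat) (M : 'M[R]_(p, q)) : R :=
  sup [set t : R | exists u : 'cV[R]_q, enorm u <= 1 /\ t = enorm (M *m u)].

Definition ones (p : nat) : 'cV[R]_p := const_mx 1.

Definition in_box (p : nat) (u : 'cV[R]_p) : Prop := forall i, 0 <= u i 0 <= 1.
Definition inY (m1 m2 : nat) (u : 'cV[R]_(m1 + m2)) : Prop :=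
  forall i : 'I_m1, 0 <= u (lshift m2 i) 0.

Definition indic (p : nat) (C : 'cV[R]_p -> Prop) (u : 'cV[R]_p) : \bar R :=
  if `[< C u >] then 0%E else +oo%E.

Definition is_proj (p : nat) (C : 'cV[R]_p -> Prop) (v w : 'cV[R]_p) : Prop :=
  C w /\ forall z, C z -> enorm (w - v) <= enorm (z - v).

Definition convex_fun (p : nat) (f : 'cV[R]_p -> R) : Prop :=
  forall (u v : 'cV[R]_p) (t : R), 0 <= t <= 1 ->
    f (t *: u + (1 - t) *: v) <= t * f u + (1 - t) * f v.

Definition esubdiff (p : nat) (g : 'cV[R]_p -> \bar R) (eps : R) (u : 'cV[R]_p)
  : set 'cV[R]_p :=
  [set v | forall z, (g u + (dot v (z - u) - eps)%:E <= g z)%E].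
Definition subdiff (p : nat) (g : 'cV[R]_p -> \bar R) (u : 'cV[R]_p) : set 'cV[R]_p :=
  esubdiff g 0 u.

Definition Lhat (n q : nat) (Q : 'M[R]_n) (c : 'cV[R]_n) (K : 'M[R]_(q, n))
  (r : 'cV[R]_q) (rho : R) (x : 'cV[R]_n) (y : 'cV[R]_q) : R :=
  dot x (Q *m x) + dot c x + dot y (K *m x + r) + rho * dot x (ones n - x).

Definition gradx (n q : nat) (Q : 'M[R]_n) (c : 'cV[R]_n) (K : 'M[R]_(q, n))
  (rho : R) (x : 'cV[R]_n) (y : 'cV[R]_q) : 'cV[R]_n :=
  c + rho *: ones n + K^T *m y + 2 *: (Q *m x) - (2 * rho) *: x.

Definition lin (n : nat) (f : 'cV[R]_n -> R) (grad : 'cV[R]_n -> 'cV[R]_n)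
  (x x' : 'cV[R]_n) : R := f x' + dot (grad x') (x - x').

Definition saddle (n q : nat) (Phi : 'cV[R]_n -> 'cV[R]_q -> \bar R)
  (xs : 'cV[R]_n) (ys : 'cV[R]_q) : Prop :=
  forall x y, (Phi xs y <= Phi xs ys)%E /\ (Phi xs ys <= Phi x ys)%E.

Definition xbar (n : nat) (x : nat -> 'cV[R]_n) (k : nat) : 'cV[R]_n :=
  if k is k'.+1 then 2 *: x k - x k' else x 0%N.

End PDHG.

(* Each PDHG iteration is a projected step, so the variational inequality of
   the Euclidean projection onto a convex set turns the y-update into a
   subgradient inclusion and, since the x-update linearizes Lhat(., y_k) at
   x_{k-1}, the x-update into an eps_k-subgradient inclusion (a).  As Lhat(., y)
   is quadratic, eps_k is its second-order part at x_k - x_{k-1}, which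
   convexity makes nonnegative and the step size bounds by
   |x_k - x_{k-1}|^2 / (8 tau1); moreover y^k - y_k = tau2 K (x_k - x_{k-1}) (b).
   Evaluating both inclusions at the saddle point, the saddle inequalities make
   their sum nonpositive; polarization rewrites the inner products as differences
   of squared distances to the saddle point, the errors of (b) cost half of
   |x_k - x_{k-1}|^2 / (2 tau1), and summing telescopes (c). *)

From HB Require Import structures.
From mathcomp Require Import all_boot all_order all_algebra.
From mathcomp Require Import all_classical all_reals.
From mathcomp Require Import ring lra.
Import Order.TTheory GRing.Theory Num.Theory.
Local Open Scope ring_scope.
Local Open Scope classical_set_scope.

Section DotProduct.
Context {R : realType} {p : nat}.
Implicit Types (u v w z : 'cV[R]_p) (a : R).

Lemma dotE u v : dot u v = (u^T *m v) 0 0.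
Proof. by rewrite /dot mxE; apply: eq_bigr => i _; rewrite mxE. Qed.

Lemma dotC u v : dot u v = dot v u.
Proof. by rewrite /dot; apply: eq_bigr => i _; rewrite mulrC. Qed.

Lemma dotDl u v w : dot (u + v) w = dot u w + dot v w.
Proof. by rewrite /dot -big_split; apply: eq_bigr => i _; rewrite mxE mulrDl. Qed.

Lemma dotZl a u w : dot (a *: u) w = a * dot u w.
Proof. by rewrite /dot mulr_sumr; apply: eq_bigr => i _; rewrite mxE mulrA. Qed.

Lemma dotNl u w : dot (- u) w = - dot u w.
Proof. by rewrite -scaleN1r dotZl mulN1r. Qed.

Lemma dotBl u v w : dot (u - v) w = dot u w - dot v w.
Proof. by rewrite dotDl dotNl. Qed.

Lemma dotDr u v w : dot w (u + v) = dot w u + dot w v.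
Proof. by rewrite dotC dotDl !(dotC w). Qed.

Lemma dotZr a u w : dot w (a *: u) = a * dot w u.
Proof. by rewrite dotC dotZl dotC. Qed.

Lemma dotNr u w : dot w (- u) = - dot w u.
Proof. by rewrite dotC dotNl dotC. Qed.

Lemma dotBr u v w : dot w (u - v) = dot w u - dot w v.
Proof. by rewrite dotDr dotNr. Qed.

Lemma dot0l w : dot 0 w = 0.
Proof. by rewrite -(scale0r 0) dotZl mul0r. Qed.

Lemma dot_ge0 u : 0 <= dot u u.
Proof. by apply: sumr_ge0 => i _; rewrite -expr2 sqr_ge0. Qed.

Lemma dot_self_eq0 u : dot u u = 0 -> u = 0.
Proof.
move=> /eqP; rewrite psumr_eq0 => [/allP u0|i _]; last by rewrite -expr2 sqr_ge0.
apply/matrixP => i j; rewrite (ord1 j) mxE.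
by have := u0 i (mem_index_enum _); rewrite mulf_eq0 orbb => /eqP.
Qed.

Lemma sqr_enorm u : enorm u ^+ 2 = dot u u.
Proof. by rewrite /enorm sqr_sqrtr // dot_ge0. Qed.

Lemma enorm_ge0 u : 0 <= enorm u.
Proof. exact: sqrtr_ge0. Qed.

Lemma enorm0 : enorm (0 : 'cV[R]_p) = 0.
Proof. by rewrite /enorm dot0l sqrtr0. Qed.

Lemma enorm_gt0 u : (0 < enorm u) = (u != 0).
Proof.
apply/idP/idP => [|u0]; first by apply: contraTneq => ->; rewrite enorm0 ltxx.
rewrite lt0r enorm_ge0 andbT; apply: contraNneq u0 => u0.
by apply/eqP/dot_self_eq0; rewrite -sqr_enorm u0 expr0n.
Qed.

Lemma enormZ a u : enorm (a *: u) = `|a| * enorm u.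
Proof. by rewrite /enorm dotZl dotZr mulrA -expr2 sqrtrM ?sqr_ge0 // sqrtr_sqr. Qed.

Lemma enorm_distC u v : enorm (u - v) = enorm (v - u).
Proof. by rewrite -opprB -scaleN1r enormZ normrN1 mul1r. Qed.

Lemma dot_polarization u v w z :
  dot (u - v) (w - z) = (enorm (w - v) ^+ 2 - enorm (w - u) ^+ 2
                         + enorm (u - z) ^+ 2 - enorm (v - z) ^+ 2) / 2.
Proof.
rewrite !sqr_enorm !dotBl !dotBr ?(dotC v u) ?(dotC w u) ?(dotC z u) ?(dotC w v).
by rewrite ?(dotC z v) ?(dotC z w); field.
Qed.

Lemma dot_le_mul_enorm u v : dot u v <= enorm u * enorm v.
Proof.
have [->|u0] := eqVneq u 0; first by rewrite dot0l mulr_ge0 ?enorm_ge0.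
have [->|v0] := eqVneq v 0; first by rewrite dotC dot0l mulr_ge0 ?enorm_ge0.
have := dot_ge0 (enorm v *: u - enorm u *: v).
rewrite !dotBl !dotBr !dotZl !dotZr -!sqr_enorm (dotC v u).
have : 0 < enorm u by rewrite enorm_gt0.
have : 0 < enorm v by rewrite enorm_gt0.
move: (enorm u) (enorm v) (dot u v) => a b d b_gt0 a_gt0 h.
have ab_gt0 : 0 < a * b by apply: mulr_gt0.
have : 0 <= (a * b) * (a * b - d) by nra.
by rewrite pmulr_rge0 // subr_ge0.
Qed.

Lemma abs_coord_le_enorm u j : `|u j 0| <= enorm u.
Proof.
rewrite -sqrtr_sqr /enorm ler_wsqrtr // expr2 /dot (bigD1 j) //= lerDl.
by apply: sumr_ge0 => i _; rewrite -expr2 sqr_ge0.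
Qed.

End DotProduct.

Section OperatorNorm.
Context {R : realType} {p q : nat}.

Lemma dot_mulmxr (M : 'M[R]_(p, q)) (u : 'cV[R]_p) (v : 'cV[R]_q) :
  dot u (M *m v) = dot (M^T *m u) v.
Proof. by rewrite !dotE mulmxA trmx_mul trmxK. Qed.

Lemma opnorm_has_ubound (M : 'M[R]_(p, q)) :
  has_ubound [set t : R | exists u : 'cV[R]_q, enorm u <= 1 /\ t = enorm (M *m u)].
Proof.
exists (Num.sqrt (\sum_i (\sum_j `|M i j|) ^+ 2)) => t [u [u_le1 ->]].
rewrite /enorm; apply: ler_wsqrtr; rewrite /dot; apply: ler_sum => i _.
have Mu_le : `|(M *m u) i 0| <= \sum_j `|M i j|.
  rewrite mxE; apply: le_trans (ler_norm_sum _ _ _) _; apply: ler_sum => j _.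
  by rewrite normrM ler_piMr // (le_trans (abs_coord_le_enorm _ _)).
have -> : (M *m u) i 0 * (M *m u) i 0 = `|(M *m u) i 0| * `|(M *m u) i 0|.
  by rewrite -normrM ger0_norm // -expr2 sqr_ge0.
by rewrite expr2 ler_pM.
Qed.

Lemma enorm_mulmx_le (M : 'M[R]_(p, q)) (u : 'cV[R]_q) :
  enorm (M *m u) <= opnorm M * enorm u.
Proof.
have [->|u0] := eqVneq u 0; first by rewrite mulmx0 !enorm0 mulr0.
have u_gt0 : 0 < enorm u by rewrite enorm_gt0.
have unit_le1 : enorm ((enorm u)^-1 *: u) <= 1.
  by rewrite enormZ gtr0_norm ?invr_gt0 // mulVf ?gt_eqF.
have := ub_le_sup (opnorm_has_ubound M)
  (ex_intro _ ((enorm u)^-1 *: u) (conj unit_le1 erefl)).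
rewrite -/(opnorm M) -scalemxAr enormZ gtr0_norm ?invr_gt0 // => h.
by rewrite -ler_pdivrMr // mulrC.
Qed.

End OperatorNorm.

Section ConvexProjection.
Context {R : realType}.

Definition convex_set {p} (C : 'cV[R]_p -> Prop) :=
  forall u v t, C u -> C v -> 0 <= t <= 1 -> C (u + t *: (v - u)).

Lemma in_box_convex n : convex_set (@in_box R n).
Proof.
move=> u v t u_box v_box /andP[t_ge0 t_le1] i; rewrite !mxE.
have /andP[? ?] := u_box i; have /andP[? ?] := v_box i; apply/andP; split; nra.
Qed.

Lemma inY_convex m1 m2 : convex_set (@inY R m1 m2).
Proof.
move=> u v t uY vY /andP[t_ge0 t_le1] i; rewrite !mxE.
have ? := uY i; have ? := vY i; nra.
Qed.

Lemma ge0_of_small_perturbations (a D : R) :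
  (forall t, 0 < t <= 1 -> 0 <= a + t * D) -> 0 <= a.
Proof.
move=> perturb; rewrite leNgt; apply/negP => a_lt0.
have den_gt0 : 0 < `|D| - a by have := normr_ge0 D; lra.
pose t := - a / (`|D| - a).
have t_gt0 : 0 < t by rewrite divr_gt0 // oppr_gt0.
have t_le1 : t <= 1 by rewrite ler_pdivrMr // mul1r; have := normr_ge0 D; lra.
have tE : t * `|D| - t * a = - a by rewrite -mulrBr mulfVK ?gt_eqF.
have := perturb t; rewrite t_gt0 t_le1 => /(_ isT).
have : t * D <= t * `|D| by rewrite ler_pM2l // ler_norm.
have : t * a < 0 by rewrite pmulr_rlt0.
lra.
Qed.

Lemma is_proj_variational {p} {C : 'cV[R]_p -> Prop} {v w z} :
  convex_set C -> is_proj C v w -> C z -> dot (v - w) (z - w) <= 0.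
Proof.
move=> C_convex [Cw w_min] Cz.
suff : 0 <= 2 * dot (w - v) (z - w) by rewrite -opprB dotNl; lra.
apply: (@ge0_of_small_perturbations _ (dot (z - w) (z - w))).
move=> t /andP[t_gt0 t_le1].
have t01 : 0 <= t <= 1 by rewrite ltW.
have := w_min _ (C_convex _ _ _ Cw Cz t01).
rewrite /enorm ler_sqrt ?dot_ge0 // addrAC.
move: (w - v) (z - w) => e d.
rewrite !dotDl !dotDr !dotZl !dotZr (dotC d e) => h.
rewrite -(pmulr_rge0 _ t_gt0); nra.
Qed.

End ConvexProjection.

Section Lhat.
Context {R : realType} {n q : nat}.
Variables (Q : 'M[R]_n) (c : 'cV[R]_n) (K : 'M[R]_(q, n)) (r : 'cV[R]_q).
Variable rho : R.
Hypothesis Q_sym : Q^T = Q.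

Local Notation Lh := (Lhat Q c K r rho).
Local Notation grad := (gradx Q c K rho).

Definition qform (d : 'cV[R]_n) := dot d (Q *m d) - rho * dot d d.

Lemma Lhat_taylor u d y : Lh (u + d) y = Lh u y + dot (grad u y) d + qform d.
Proof.
have Q_selfadj : dot (Q *m d) u = dot (Q *m u) d.
  by rewrite -{1}Q_sym -dot_mulmxr dotC.
rewrite /Lhat /gradx /qform !mulmxDr.
rewrite !(dotDl, dotDr, dotBl, dotBr, dotZl, dotZr, dotNl, dotNr, dot_mulmxr).
by rewrite Q_sym Q_selfadj (dotC (ones R n) d) (dotC d u); ring.
Qed.

Lemma Lhat_subr u v w : Lh u v - Lh u w = dot (K *m u + r) (v - w).
Proof. by rewrite /Lhat [RHS]dotBr (dotC v) (dotC w); ring. Qed.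

Lemma qformZ a d : qform (a *: d) = a ^+ 2 * qform d.
Proof. by rewrite /qform -scalemxAr !dotZl !dotZr; ring. Qed.

Lemma qform_ge0 {y} : convex_fun (fun u => Lh u y) -> forall d, 0 <= qform d.
Proof.
move=> Lh_convex d.
have taylor0 d' : Lh d' y = Lh 0 y + dot (grad 0 y) d' + qform d'.
  by rewrite -Lhat_taylor add0r.
have := Lh_convex d 0 (2^-1); rewrite scaler0 addr0.
rewrite (taylor0 d) (taylor0 (2^-1 *: d)) qformZ dotZr.
have half01 : 0 <= (2 : R)^-1 <= 1 by apply/andP; split; lra.
move=> /(_ half01); lra.
Qed.

Lemma lin_le_Lhat {y} : convex_fun (fun u => Lh u y) ->
  forall u z, lin (fun u => Lh u y) (fun u => grad u y) z u <= Lh z y.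
Proof.
move=> Lh_convex u z; rewrite /lin.
have := Lhat_taylor u (z - u) y; rewrite subrKC => ->.
by have := qform_ge0 Lh_convex (z - u); lra.
Qed.

Lemma qform_le_opnorm d : 0 <= rho -> qform d <= opnorm Q * enorm d ^+ 2.
Proof.
move=> rho_ge0; rewrite /qform.
have : dot d (Q *m d) <= opnorm Q * enorm d ^+ 2.
  apply: le_trans (dot_le_mul_enorm d (Q *m d)) _.
  by rewrite [enorm d * _]mulrC expr2 mulrA ler_wpM2r ?enorm_ge0 ?enorm_mulmx_le.
by have := mulr_ge0 rho_ge0 (dot_ge0 d); lra.
Qed.

End Lhat.

Section Indicator.
Context {R : realType} {p : nat}.
Implicit Types (C : 'cV[R]_p -> Prop) (u : 'cV[R]_p).

Lemma indic_in {C u} : C u -> indic C u = 0%E.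
Proof. by rewrite /indic; case: asboolP. Qed.

Lemma indic_out {C u} : ~ C u -> indic C u = +oo%E.
Proof. by rewrite /indic; case: asboolP. Qed.

Lemma esubdiff_add_indic (f : 'cV[R]_p -> R) C eps u v : C u ->
  (forall z, C z -> f u + (dot v (z - u) - eps) <= f z) ->
  esubdiff (fun z => (f z)%:E + indic C z)%E eps u v.
Proof.
move=> Cu f_ineq z /=; rewrite (indic_in Cu) adde0.
case: (pselect (C z)) => Cz.
- by rewrite (indic_in Cz) adde0 -EFinD lee_fin f_ineq.
- by rewrite (indic_out Cz) addey // leey.
Qed.

End Indicator.

Lemma saddle_indic {R : realType} {n q : nat} {f : 'cV[R]_n -> 'cV[R]_q -> R}
    {C1 C2 xs ys x0 y0} : C1 x0 -> C2 y0 ->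
  saddle (fun u v => ((f u v)%:E + indic C1 u - indic C2 v)%E) xs ys ->
  [/\ C1 xs, C2 ys, (forall v, C2 v -> f xs v <= f xs ys)
    & (forall u, C1 u -> f xs ys <= f u ys)].
Proof.
move=> C1x0 C2y0 xys_saddle.
have C2ys : C2 ys.
  apply: contrapT => /indic_out C2ys_oo; have := (xys_saddle x0 y0).1.
  rewrite C2ys_oo (indic_in C2y0).
  case: (pselect (C1 xs)) => [/indic_in|/indic_out] -> /=.
  - by rewrite addeNy leeNy_eq oppr0 !adde0.
  - by rewrite addeNy leeNy_eq oppr0 adde0 addey.
have C1xs : C1 xs.
  apply: contrapT => /indic_out C1xs_oo; have := (xys_saddle x0 ys).2.
  rewrite C1xs_oo (indic_in C1x0) (indic_in C2ys) /=.
  by rewrite oppr0 !adde0 addey // leye_eq.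
split => // [v C2v|u C1u].
- have := (xys_saddle x0 v).1.
  by rewrite (indic_in C2v) (indic_in C2ys) (indic_in C1xs) /= oppr0 !adde0 lee_fin.
- have := (xys_saddle u ys).2.
  by rewrite (indic_in C1u) (indic_in C2ys) (indic_in C1xs) /= oppr0 !adde0 lee_fin.
Qed.

Lemma xbar_subS {R : realType} {n} (x : nat -> 'cV[R]_n) k :
  xbar x k.+1 - x k.+1 = x k.+1 - x k.
Proof. by rewrite /= scaler_nat mulr2n addrAC addrK. Qed.

Section PDHG.
Context {R : realType} {n q : nat}.
Variables (Q : 'M[R]_n) (c : 'cV[R]_n) (K : 'M[R]_(q, n)) (r : 'cV[R]_q).
Variables (rho tau1 tau2 : R) (C1 : 'cV[R]_n -> Prop) (C2 : 'cV[R]_q -> Prop).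
Variables (x : nat -> 'cV[R]_n) (y : nat -> 'cV[R]_q).
Hypotheses (Q_sym : Q^T = Q) (tau1_gt0 : 0 < tau1) (tau2_gt0 : 0 < tau2).
Hypotheses (C1_convex : convex_set C1) (C2_convex : convex_set C2).
Hypothesis y_step : forall k, (0 < k)%N ->
  is_proj C2 (y k.-1 + tau2 *: (K *m xbar x k.-1 + r)) (y k).
Hypothesis x_step : forall k, (0 < k)%N ->
  is_proj C1 (x k.-1 - tau1 *: gradx Q c K rho (x k.-1) (y k)) (x k).
Hypothesis Lhat_convex : forall k, (0 < k)%N ->
  convex_fun (fun u => Lhat Q c K r rho u (y k)).

Hypotheses (rho_ge0 : 0 <= rho) (opnormQ_le : 8 * tau1 * opnorm Q <= 1).
Hypothesis opnormK_le : tau1 * tau2 * opnorm K ^+ 2 <= 1 / 4.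

Local Notation Lh := (Lhat Q c K r rho).

(* [ysup k] is the paper's y^k and [lin_err k] its eps_k. *)
Definition ysup k :=
  if k is k'.+1 then y k + tau2 *: (K *m (xbar x k - x k)) else y 0%N.

Definition lin_err k :=
  Lh (x k) (y k)
  - lin (fun u => Lh u (y k)) (fun u => gradx Q c K rho u (y k)) (x k) (x k.-1).

Lemma ysupE k : ysup k = y k + tau2 *: (K *m (xbar x k - x k)).
Proof. by case: k => //=; rewrite subrr mulmx0 scaler0 addr0. Qed.

Lemma ysup_subE k : ysup k - y k = tau2 *: (K *m (x k - x k.-1)).
Proof.
case: k => [|k]; first by rewrite /= !subrr mulmx0 scaler0.
by rewrite ysupE xbar_subS addrC addKr.
Qed.

Lemma lin_errE k : lin_err k = qform Q rho (x k - x k.-1).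
Proof.
rewrite /lin_err /lin.
have := Lhat_taylor Q c K r rho Q_sym (x k.-1) (x k - x k.-1) (y k).
by rewrite subrKC => ->; ring.
Qed.

Lemma lin_err_le k :
  lin_err k <= (8 * tau1)^-1 * enorm (x k - x k.-1) ^+ 2.
Proof.
rewrite lin_errE.
apply: le_trans (qform_le_opnorm Q rho (x k - x k.-1) rho_ge0) _.
rewrite ler_wpM2r ?sqr_ge0 // -div1r ler_pdivlMr ?mulr_gt0 //.
by rewrite mulrC.
Qed.

Lemma ysup_gap_le k :
  tau2^-1 * enorm (ysup k - y k) ^+ 2 <= (4 * tau1)^-1 * enorm (x k - x k.-1) ^+ 2.
Proof.
rewrite ysup_subE enormZ gtr0_norm // exprMn mulrA.
have -> : tau2^-1 * tau2 ^+ 2 = tau2 by rewrite expr2 mulKf ?gt_eqF.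
set d := x k - x k.-1.
have Kd_le : enorm (K *m d) ^+ 2 <= opnorm K ^+ 2 * enorm d ^+ 2.
  by rewrite -exprMn !expr2 ler_pM ?enorm_ge0 ?enorm_mulmx_le.
apply: le_trans (ler_wpM2l (ltW tau2_gt0) Kd_le) _.
rewrite mulrA ler_wpM2r ?sqr_ge0 // -div1r ler_pdivlMr ?mulr_gt0 //.
by have := opnormK_le; lra.
Qed.

Lemma y_step_ineq {k z} : (0 < k)%N -> C2 z ->
  dot (tau2^-1 *: (ysup k.-1 - ysup k)) (z - y k) <= Lh (x k) (y k) - Lh (x k) z.
Proof.
case: k => // k _ C2z /=.
have /= proj_ineq := is_proj_variational C2_convex (y_step _ (ltn0Sn k)) C2z.
rewrite -[X in _ <= X]opprB Lhat_subr !ysupE xbar_subS dotZl ler_pdivrMl //.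
set w := z - y k.+1.
rewrite !(mulmxBr, mulmxDr, scalerDr, scalerBr, dotDl, dotBl, dotZl, dotNl) in proj_ineq *.
lra.
Qed.

Lemma x_step_ineq {k z} : (0 < k)%N -> C1 z ->
  Lh (x k) (y k) + (dot (tau1^-1 *: (x k.-1 - x k)) (z - x k) - lin_err k)
  <= Lh z (y k).
Proof.
case: k => // k _ C1z.
have /= proj_ineq := is_proj_variational C1_convex (x_step _ (ltn0Sn k)) C1z.
have := lin_le_Lhat Q c K r rho Q_sym (Lhat_convex _ (ltn0Sn k)) (x k) z.
rewrite /lin_err /lin /=.
set g := gradx Q c K rho (x k) (y k.+1).
rewrite (addrAC (x k)) (dotBl (x k - x k.+1)) dotZl in proj_ineq.
have g_split : dot g (z - x k) = dot g (x k.+1 - x k) + dot g (z - x k.+1).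
  by rewrite !dotBr; ring.
rewrite g_split dotZl.
set w := z - x k.+1 in proj_ineq *.
have : tau1^-1 * dot (x k - x k.+1) w <= dot g w by rewrite ler_pdivrMl //; lra.
lra.
Qed.

Lemma y_step_subdiff k : (0 < k)%N ->
  subdiff (fun v => ((- Lh (x k) v)%:E + indic C2 v)%E) (y k)
    (tau2^-1 *: (ysup k.-1 - ysup k)).
Proof.
move=> k_gt0; apply: esubdiff_add_indic => [|z C2z]; first exact: (y_step _ k_gt0).1.
by have := y_step_ineq k_gt0 C2z; lra.
Qed.

Lemma x_step_esubdiff k : (0 < k)%N ->
  esubdiff (fun u => ((Lh u (y k))%:E + indic C1 u)%E) (lin_err k) (x k)
    (tau1^-1 *: (x k.-1 - x k)).
Proof.
move=> k_gt0; apply: esubdiff_add_indic => [|z C1z]; first exact: (x_step _ k_gt0).1.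
exact: x_step_ineq.
Qed.

Variables (xs : 'cV[R]_n) (ys : 'cV[R]_q).
Hypotheses (xs_C1 : C1 xs) (ys_C2 : C2 ys).
Hypothesis saddle_x : forall u, C1 u -> Lh xs ys <= Lh u ys.
Hypothesis saddle_y : forall v, C2 v -> Lh xs v <= Lh xs ys.

Definition saddle_dist j :=
  (2 * tau1)^-1 * enorm (xs - x j) ^+ 2 + (2 * tau2)^-1 * enorm (ys - ysup j) ^+ 2.

Lemma saddle_dist_decrease k : (0 < k)%N ->
  (4 * tau1)^-1 * enorm (x k - x k.-1) ^+ 2
  + (2 * tau2)^-1 * enorm (y k - ysup k.-1) ^+ 2
  <= saddle_dist k.-1 - saddle_dist k.
Proof.
move=> k_gt0.
have := x_step_ineq k_gt0 xs_C1; have := y_step_ineq k_gt0 ys_C2.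
have := saddle_y _ (y_step _ k_gt0).1; have := saddle_x _ (x_step _ k_gt0).1.
have := lin_err_le k; have := ysup_gap_le k.
rewrite !dotZl !dot_polarization subrr !enorm0 expr0n /=.
rewrite (enorm_distC (x k.-1)) (enorm_distC (ysup k.-1)) /saddle_dist !invfM.
lra.
Qed.

Lemma saddle_dist_telescope N :
  (4 * tau1)^-1 * (\sum_(1 <= k < N.+1) enorm (x k - x k.-1) ^+ 2)
  + (2 * tau2)^-1 * (\sum_(1 <= k < N.+1) enorm (y k - ysup k.-1) ^+ 2)
  <= saddle_dist 0 - saddle_dist N.
Proof.
rewrite !mulr_sumr -big_split /=.
apply: le_trans (_ : \sum_(1 <= k < N.+1) (saddle_dist k.-1 - saddle_dist k) <= _).
  by apply: ler_sum_nat => k /andP[k_gt0 _]; apply: saddle_dist_decrease.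
rewrite (@telescope_sumr_eq _ 1 N.+1 (fun k => - saddle_dist k.-1)) //=.
  by rewrite opprK addrC.
by move=> k _ /=; rewrite opprK addrC.
Qed.

Lemma pdhg_energy_bound N :
  (4 * tau1)^-1 * (\sum_(1 <= k < N.+1) enorm (x k - x k.-1) ^+ 2)
  + (2 * tau2)^-1 * (\sum_(1 <= k < N.+1) enorm (y k - ysup k.-1) ^+ 2)
  <= (2 * tau1)^-1 * enorm (xs - x 0%N) ^+ 2 + (2 * tau2)^-1 * enorm (ys - y 0%N) ^+ 2.
Proof.
apply: le_trans (saddle_dist_telescope N) _.
have : 0 <= saddle_dist N.
  by rewrite addr_ge0 // mulr_ge0 ?sqr_ge0 // invr_ge0 mulr_ge0 // ltW.
rewrite /saddle_dist /=; lra.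
Qed.

End PDHG.

Theorem mainTheorem1 (R : realType) (n m1 m2 : nat)
  (Q : 'M[R]_n) (c : 'cV[R]_n) (A : 'M[R]_(m1, n)) (b : 'cV[R]_m1)
  (B : 'M[R]_(m2, n)) (d : 'cV[R]_m2) (rho tau1 tau2 : R)
  (x : nat -> 'cV[R]_n) (y : nat -> 'cV[R]_(m1 + m2))
  (xs : 'cV[R]_n) (ys : 'cV[R]_(m1 + m2)) :
  (0 < n)%N -> (0 < m1)%N -> (0 < m2)%N ->
  Q^T = Q -> 0 <= rho -> 0 < tau1 -> 0 < tau2 ->
  let K : 'M[R]_(m1 + m2, n) := - col_mx A B in
  let r : 'cV[R]_(m1 + m2) := col_mx b d in
  let L := 2 * (opnorm Q + rho) in
  let Lh := Lhat Q c K r rho in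
  let Phi := fun (u : 'cV[R]_n) (v : 'cV[R]_(m1 + m2)) =>
    ((Lh u v)%:E + indic (@in_box R n) u - indic (@inY R m1 m2) v)%E in
  (* PDHG iterates *)
  in_box (x 0%N) ->
  (forall k, (0 < k)%N ->
     is_proj (@inY R m1 m2) (y k.-1 + tau2 *: (K *m xbar x k.-1 + r)) (y k)) ->
  (forall k, (0 < k)%N ->
     is_proj (@in_box R n) (x k.-1 - tau1 *: gradx Q c K rho (x k.-1) (y k)) (x k)) ->
  (* assumptions *)
  (forall k, (0 < k)%N -> convex_fun (fun u => Lh u (y k))) ->
  tau1 * tau2 * opnorm K ^+ 2 <= 1 / 4 ->
  4 * L * tau1 <= 1 ->
  saddle Phi xs ys ->
  let ysup := fun k : nat =>
    if k is k'.+1 then y k + tau2 *: (K *m (xbar x k - x k)) else y 0%N in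
  let eps := fun k : nat =>
    Lh (x k) (y k)
    - lin (fun u => Lh u (y k)) (fun u => gradx Q c K rho u (y k)) (x k) (x k.-1) in
  (* (a) *)
  (forall k, (0 < k)%N ->
     subdiff (fun v => ((- Lh (x k) v)%:E + indic (@inY R m1 m2) v)%E) (y k)
       (tau2^-1 *: (ysup k.-1 - ysup k))
   /\ esubdiff (fun u => ((Lh u (y k))%:E + indic (@in_box R n) u)%E) (eps k) (x k)
       (tau1^-1 *: (x k.-1 - x k))) /\
  (* (b) *)
  (forall k, (0 < k)%N ->
     eps k <= (8 * tau1)^-1 * enorm (x k - x k.-1) ^+ 2 /\
     tau2^-1 * enorm (ysup k - y k) ^+ 2 <= (4 * tau1)^-1 * enorm (x k - x k.-1) ^+ 2) /\
  (* (c) *)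
  (forall N, (0 < N)%N ->
     (4 * tau1)^-1 * (\sum_(1 <= k < N.+1) enorm (x k - x k.-1) ^+ 2)
     + (2 * tau2)^-1 * (\sum_(1 <= k < N.+1) enorm (y k - ysup k.-1) ^+ 2)
     <= (2 * tau1)^-1 * enorm (xs - x 0%N) ^+ 2 + (2 * tau2)^-1 * enorm (ys - y 0%N) ^+ 2).
Proof.
move=> _ _ _ Q_sym rho_ge0 tau1_gt0 tau2_gt0 K r L Lh Phi x0_box y_step x_step
  Lh_convex opnormK_le L_le Phi_saddle ysup eps.
have Y0 : inY (0 : 'cV[R]_(m1 + m2)) by move=> i; rewrite mxE.
have [xs_box ys_Y saddle_y saddle_x] := saddle_indic x0_box Y0 Phi_saddle.
have opnormQ_le : 8 * tau1 * opnorm Q <= 1.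
  by have := mulr_ge0 rho_ge0 (ltW tau1_gt0); rewrite /L in L_le; lra.
have box_convex := @in_box_convex R n; have Y_convex := @inY_convex R m1 m2.
split; [|split].
- by move=> k k_gt0; split; [exact: y_step_subdiff | exact: x_step_esubdiff].
- by move=> k k_gt0; split; [exact: lin_err_le | exact: ysup_gap_le].
- by move=> N _; apply: pdhg_energy_bound; eassumption.
Qed.
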